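(* Let $(\mathcal M,X,\bot)$ be a non trivial and accessible concurrent system. Then its characteristic root $r$ satisfies $r<\infty$.
   Context: A trace monoid $\mathcal M=\mathcal M(\Sigma,I)$ is $\langle\Sigma\mid ab=ba\ ((a,b)\in I)\rangle$ with $\Sigma$ finite and $I$ irreflexive symmetric; $|x|$ is trace length. A concurrent system $(\mathcal M,X,\bot)$: $X$ a finite set, $\bot\notin X$, a right action of $\mathcal M$ on $X\cup\{\bot\}$ with $\bot\cdot x=\bot$ for all $x$. Non trivial: there exist a state $\alpha$ and a letter $a$ with $\alpha\cdot a\neq\bot$. Accessible: for all $\alpha,\beta\in X$ there is $x$ with $\alpha\cdot x=\beta$. The characteristic root $r\in(0,+\infty]$ is the minimum over $\alpha,\beta\in X$ of the radius of convergence of $\sum_{n\ge0}\#\{x\in\mathcal M:|x|=n,\ \alpha\cdot x=\beta\}z^n$. *)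

From mathcomp Require Import all_boot.
From Stdlib Require Import Reals.
From Coquelicot Require Import Coquelicot.

Set Implicit Arguments.
Unset Strict Implicit.
Unset Printing Implicit Defensive.

Definition indep_rel (Sigma : finType) (I : rel Sigma) : Prop :=
  irreflexive I /\ symmetric I.

Definition swap_step (Sigma : finType) (I : rel Sigma) (n : nat)
    (w w' : n.-tuple Sigma) : bool :=
  [exists i : 'I_n, exists a : Sigma, exists b : Sigma,
     [&& I a b,
         val w == take i w ++ [:: a; b] ++ drop i.+2 w &
         val w' == take i w ++ [:: b; a] ++ drop i.+2 w]].

(* The trace of length n represented by the word w: its equivalence class
   under the congruence generated by the commutations (a,b) in I. *)
Definition trace_class (Sigma : finType) (I : rel Sigma) (n : nat)
    (w : n.-tuple Sigma) : {set n.-tuple Sigma} :=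
  [set w' | connect (@swap_step Sigma I n) w w'].

(* A concurrent system (M(Sigma,I), X, bot): the states X ∪ {bot} are encoded
   as option X (None = bot).  A right action of M(Sigma,I) on option X is the
   same as an action of the generators, [delta], which respects the defining
   relations ab = ba for (a,b) in I; it is absorbing at bot. *)
Record concurrent_system (Sigma : finType) (I : rel Sigma) := ConcSys {
  cs_state : finType;
  cs_delta : option cs_state -> Sigma -> option cs_state;
  cs_bot : forall a, cs_delta None a = None;
  cs_comm : forall s a b, I a b ->
      cs_delta (cs_delta s a) b = cs_delta (cs_delta s b) a
}.

Definition cs_act (Sigma : finType) (I : rel Sigma)
    (S : concurrent_system I) (s : option (cs_state S)) (w : seq Sigma)
    : option (cs_state S) :=
  foldl (@cs_delta Sigma I S) s w.

Definition non_trivial (Sigma : finType) (I : rel Sigma)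
    (S : concurrent_system I) : Prop :=
  exists (alpha : cs_state S) (a : Sigma), cs_delta (Some alpha) a <> None.

Definition accessible (Sigma : finType) (I : rel Sigma)
    (S : concurrent_system I) : Prop :=
  forall alpha beta : cs_state S,
    exists w : seq Sigma, cs_act (Some alpha) w = Some beta.

Definition count_traces (Sigma : finType) (I : rel Sigma)
    (S : concurrent_system I) (alpha beta : cs_state S) (n : nat) : nat :=
  #|[set trace_class I w | w in
       [set w : n.-tuple Sigma | cs_act (Some alpha) w == Some beta]]|.

Definition radius (Sigma : finType) (I : rel Sigma)
    (S : concurrent_system I) (alpha beta : cs_state S) : Rbar :=
  CV_radius (fun n => INR (count_traces alpha beta n)).

(* Characteristic root: minimum over all pairs (alpha, beta) of the radii
   (p_infty if X were empty). *)
Definition char_root (Sigma : finType) (I : rel Sigma)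
    (S : concurrent_system I) : Rbar :=
  foldr (fun p m => Rbar_min (radius p.1 p.2) m) p_infty
        (enum [set: cs_state S * cs_state S]).

(* A letter a enabled at some state alpha, followed by a word leading back
   to alpha (accessibility), is a nonempty loop u at alpha.  Its powers u^m
   give a trace of every length m|u| from alpha to alpha, so infinitely many
   coefficients of the generating series of (alpha, alpha) are at least 1;
   that series then diverges at z = 1, hence r <= 1. *)
From mathcomp Require Import all_boot.
From Stdlib Require Import Reals Lra.
From Coquelicot Require Import Coquelicot.

Set Implicit Arguments.
Unset Strict Implicit.
Unset Printing Implicit Defensive.

Lemma CV_radius_lt_p_infty (a : nat -> R) :
  (forall N, exists2 n, (N <= n)%nat & (1 <= a n)%R) ->
  Rbar_lt (CV_radius a) p_infty.
Proof.
move=> a_large; case Ha: (CV_radius a) => [r| |] //.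
have in_disk : Rbar_lt (Rabs 1) (CV_radius a) by rewrite Ha.
have /is_lim_seq_spec a_to0 := ex_series_lim_0 _ (CV_radius_inside _ _ in_disk).
have [N HN] := a_to0 (mkposreal 1 Rlt_0_1).
have [n /leP le_Nn a_n_ge1] := a_large N.
have := HN n le_Nn; rewrite pow_n_pow pow1 scal_one Rminus_0_r /=.
by rewrite Rabs_pos_eq; lra.
Qed.

Lemma foldr_Rbar_min_le (T : eqType) (f : T -> Rbar) (l : seq T) (p : T) :
  p \in l -> Rbar_le (foldr (fun q m => Rbar_min (f q) m) p_infty l) (f p).
Proof.
elim: l => [|q l IHl] //=; rewrite inE => /orP [/eqP <-|p_l].
  exact: Rbar_min_l.
exact: Rbar_le_trans (Rbar_min_r _ _) (IHl p_l).
Qed.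

Section ConcurrentSystem.

Variables (Sigma : finType) (I : rel Sigma) (S : concurrent_system I).

Lemma cs_act_cat (s : option (cs_state S)) (u v : seq Sigma) :
  cs_act (S := S) s (u ++ v) = cs_act (cs_act s u) v.
Proof. exact: foldl_cat. Qed.

Lemma cs_act_loop (alpha : cs_state S) (u : seq Sigma) m :
  cs_act (Some alpha) u = Some alpha ->
  cs_act (Some alpha) (flatten (nseq m u)) = Some alpha.
Proof. by move=> loop_u; elim: m => [|m IHm] //=; rewrite cs_act_cat loop_u. Qed.

Lemma count_traces_gt0 (alpha beta : cs_state S) (w : seq Sigma) :
  cs_act (Some alpha) w = Some beta -> (0 < count_traces alpha beta (size w))%nat.
Proof.
move=> w_ab; apply/card_gt0P; exists (trace_class I (in_tuple w)).
by apply/imsetP; exists (in_tuple w); rewrite // inE w_ab.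
Qed.

Lemma char_root_le_radius (alpha beta : cs_state S) :
  Rbar_le (char_root S) (radius alpha beta).
Proof.
rewrite /char_root.
have := @foldr_Rbar_min_le _ (fun p : cs_state S * cs_state S => radius p.1 p.2)
  (enum [set: cs_state S * cs_state S]) (alpha, beta).
by rewrite mem_enum inE; apply.
Qed.

Lemma exists_nonempty_loop :
  non_trivial S -> accessible S ->
  exists (alpha : cs_state S) (u : seq Sigma), (0 < size u)%nat /\ cs_act (Some alpha) u = Some alpha.
Proof.
move=> [alpha [a a_enabled]] acc.
case alpha_a: (cs_delta (Some alpha) a) a_enabled => [gamma|] // _.
have [w w_ga] := acc gamma alpha.
by exists alpha, (a :: w); split; rewrite // /cs_act /= alpha_a.
Qed.

Lemma radius_loop_lt_p_infty (alpha : cs_state S) (u : seq Sigma) :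
  (0 < size u)%nat -> cs_act (Some alpha) u = Some alpha ->
  Rbar_lt (radius alpha alpha) p_infty.
Proof.
move=> u_gt0 loop_u; apply: CV_radius_lt_p_infty => N.
exists (size (flatten (nseq N u))).
  by rewrite size_flatten /shape map_nseq sumn_nseq leq_pmull.
apply: (le_INR 1); apply/leP; apply: count_traces_gt0.
exact: cs_act_loop.
Qed.

End ConcurrentSystem.

Theorem proposition2 (Sigma : finType) (I : rel Sigma)
    (HI : indep_rel I) (S : concurrent_system I) :
  non_trivial S -> accessible S -> Rbar_lt (char_root S) p_infty.
Proof.
move=> nontriv acc.
have [alpha [u [u_gt0 loop_u]]] := exists_nonempty_loop nontriv acc.
have := radius_loop_lt_p_infty u_gt0 loop_u.
have := char_root_le_radius alpha alpha.
by case: (char_root S) => [r| |]; case: (radius alpha alpha).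
Qed.
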